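(* Let $G$, with terminal set $T$, be an instance of a solution graph concept $\mathcal{S}$, and let $\mathcal{S}^c(G,T)$ be the contracted solution graph for some terminal projection $p$. Let $\alpha$ and $\beta$ be two solutions of $G$ and let $S$ be a certificate for $\mathcal{S}^c(G,T)$; let $x$ be the node with $\alpha\in S_x$ and $y$ the node with $\beta\in S_y$. Then there is a path from $\alpha$ to $\beta$ in $\mathcal{S}(G)$ if and only if there is a path from $x$ to $y$ in $\mathcal{S}^c(G,T)$.
   Context: A solution graph concept $\mathcal{S}$ specifies a class of instances, for each instance $G$ a set of solutions, and a symmetric adjacency relation between solutions of the same instance; the solution graph $\mathcal{S}(G)$ has the solutions of $G$ as nodes and edges given by the adjacency relation. A terminal projection $p$ assigns a label $p(G,T,\gamma)$ to every triple consisting of an instance $G$, a set $T$ (of terminals) and a solution $\gamma$ of $G$. A label component of $\mathcal{S}(G)$ (for $T$) is a maximal set of solutions that all have the same label and induce a connected subgraph of $\mathcal{S}(G)$. The contracted solution graph $\mathcal{S}^c(G,T)$ is the labeled graph $(H,\ell)$ whose nodes correspond bijectively to label components, distinct nodes $x,y$ being adjacent iff some solution in the component of $x$ is adjacent in $\mathcal{S}(G)$ to some solution in the component of $y$, and $\ell(x)$ the common label of the component of $x$; labeled graphs are identified up to label-preserving isomorphism. A certificate for $\mathcal{S}^c(G,T)=(H,\ell)$ is an assignment of a nonempty set $S_x$ of solutions of $G$ to every node $x\in V(H)$ such that: (a) $\{S_x\}$ partitions the set of solutions of $G$; (b) $p(G,T,\gamma)=\ell(x)$ for all $\gamma\in S_x$;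 (c) $\ell(x)\ne\ell(y)$ for every edge $xy$ of $H$; (d) each $S_x$ induces a connected subgraph of $\mathcal{S}(G)$; (e) distinct nodes $x,y$ are adjacent in $H$ iff there exist $\alpha\in S_x$, $\beta\in S_y$ adjacent in $\mathcal{S}(G)$. *)

From Stdlib Require Import Relations.

Record SolutionGraphConcept := {
  Inst : Type;
  Sol : Inst -> Type;
  Adj : forall G : Inst, Sol G -> Sol G -> Prop;
  Adj_sym : forall (G : Inst) (a b : Sol G), Adj G a b -> Adj G b a
}.

Definition terminal_projection (S : SolutionGraphConcept) (TT L : Type) :=
  forall G : Inst S, TT -> Sol S G -> L.

Section Contracted.
Variables (S : SolutionGraphConcept) (TT L : Type)
  (p : terminal_projection S TT L) (G : Inst S) (T : TT).

Local Notation X := (Sol S G).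
Local Notation adj := (Adj S G).
Local Notation lab := (p G T).

Definition sol_path (a b : X) : Prop := clos_refl_trans X adj a b.

Definition induces_connected (A : X -> Prop) : Prop :=
  forall a b, A a -> A b ->
    clos_refl_trans X (fun u v => A u /\ A v /\ adj u v) a b.

Definition same_label (A : X -> Prop) : Prop :=
  forall a b, A a -> A b -> lab a = lab b.

Definition label_component (A : X -> Prop) : Prop :=
  (exists a, A a) /\ same_label A /\ induces_connected A /\
  (forall B : X -> Prop, same_label B -> induces_connected B ->
     (forall a, A a -> B a) -> forall a, B a -> A a).

(* (V, E, l) is (label-preservingly isomorphic to) the contracted solution
   graph S^c(G,T): f maps nodes bijectively (sets taken up to extensional
   equality) onto label components, edges between distinct nodes are exactly
   those between components containing adjacent solutions, and the label of a
   node is the common label of its component. *)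
Definition is_contracted_solution_graph (V : Type) (E : V -> V -> Prop)
  (l : V -> L) : Prop :=
  exists f : V -> (X -> Prop),
    (forall v, label_component (f v)) /\
    (forall A, label_component A -> exists v, forall a, f v a <-> A a) /\
    (forall v w, (forall a, f v a <-> f w a) -> v = w) /\
    (forall v w, E v w <->
       (v <> w /\ exists a b, f v a /\ f w b /\ adj a b)) /\
    (forall v a, f v a -> lab a = l v).

Definition certificate (V : Type) (E : V -> V -> Prop) (l : V -> L)
  (Sx : V -> X -> Prop) : Prop :=
  (forall v, exists a, Sx v a) /\
  (forall a, exists v, Sx v a /\ forall w, Sx w a -> w = v) /\
  (forall v a, Sx v a -> lab a = l v) /\
  (forall v w, E v w -> l v <> l w) /\
  (forall v, induces_connected (Sx v)) /\
  (forall v w, v <> w ->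
     (E v w <-> exists a b, Sx v a /\ Sx w b /\ adj a b)).

End Contracted.

From Stdlib Require Import Relations Classical.

(* A certificate partitions the solutions into connected blocks, and two
   distinct blocks are adjacent in the contracted graph exactly when they
   contain adjacent solutions.  Hence every solution path projects onto a walk
   of the blocks it visits, and conversely every walk of blocks lifts to a
   solution path by crossing each edge along an adjacent pair and moving
   inside each block along its connected subgraph.  Only conditions (a), (d)
   and (e) of the certificate are used: neither the labels nor the hypothesis
   that (V, E, l) is the contracted solution graph play any role. *)

Lemma clos_rt_mono (A : Type) (R R' : relation A) :
  inclusion A R R' -> inclusion A (clos_refl_trans A R) (clos_refl_trans A R').
Proof.
  intros HRR' a b Hab; induction Hab as [a b Hab | a | a b c _ IHab _ IHbc].
  - now apply rt_step, HRR'.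
  - apply rt_refl.
  - now apply rt_trans with b.
Qed.

Section BlockPartition.

Variables (S : SolutionGraphConcept) (G : Inst S).
Variables (V : Type) (E : V -> V -> Prop) (Sx : V -> Sol S G -> Prop).

Local Notation adj := (Adj S G).

Hypothesis blocks_nonempty : forall v, exists a, Sx v a.
Hypothesis block_unique : forall a, exists v, Sx v a /\ forall w, Sx w a -> w = v.
Hypothesis blocks_connected : forall v, induces_connected S G (Sx v).
Hypothesis edge_iff_adj_blocks : forall v w, v <> w ->
  (E v w <-> exists a b, Sx v a /\ Sx w b /\ adj a b).

Lemma block_eq v w a : Sx v a -> Sx w a -> v = w.
Proof.
  intros Hv Hw; destruct (block_unique a) as [u [_ Hu]].
  now rewrite (Hu v Hv), (Hu w Hw).
Qed.

Lemma sol_path_in_block v a b : Sx v a -> Sx v b -> sol_path S G a b.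
Proof.
  intros Ha Hb; apply clos_rt_mono with (2 := blocks_connected v a b Ha Hb).
  now intros u u' (_ & _ & Huu').
Qed.

Lemma node_path_of_adj v w a b :
  Sx v a -> Sx w b -> adj a b -> clos_refl_trans V E v w.
Proof.
  intros Ha Hb Hab; destruct (classic (v = w)) as [<- | Hvw].
  - apply rt_refl.
  - apply rt_step, (edge_iff_adj_blocks _ _ Hvw); eauto.
Qed.

Lemma node_path_of_sol_path a b v w :
  sol_path S G a b -> Sx v a -> Sx w b -> clos_refl_trans V E v w.
Proof.
  intros Hab; revert v w.
  induction Hab as [a b Hab | a | a b c _ IHab _ IHbc]; intros v w Ha Hb.
  - now apply node_path_of_adj with a b.
  - rewrite (block_eq _ _ _ Ha Hb); apply rt_refl.
  - destruct (block_unique b) as [u [Hu _]].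
    apply rt_trans with u; [now apply IHab | now apply IHbc].
Qed.

Lemma sol_path_of_edge v w a b :
  E v w -> Sx v a -> Sx w b -> sol_path S G a b.
Proof.
  intros Hvw Ha Hb; destruct (classic (v = w)) as [<- | Hneq].
  - now apply sol_path_in_block with v.
  - destruct (proj1 (edge_iff_adj_blocks _ _ Hneq) Hvw) as (a' & b' & Ha' & Hb' & Hab').
    apply rt_trans with a'; [now apply sol_path_in_block with v |].
    apply rt_trans with b'; [now apply rt_step |].
    now apply sol_path_in_block with w.
Qed.

Lemma sol_path_of_node_path v w a b :
  clos_refl_trans V E v w -> Sx v a -> Sx w b -> sol_path S G a b.
Proof.
  intros Hvw; revert a b.
  induction Hvw as [v w Hvw | v | u v w _ IHuv _ IHvw]; intros a b Ha Hb.
  - now apply sol_path_of_edge with v w.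
  - now apply sol_path_in_block with v.
  - destruct (blocks_nonempty v) as [c Hc].
    apply rt_trans with c; [now apply IHuv | now apply IHvw].
Qed.

End BlockPartition.

Theorem proposition1 (S : SolutionGraphConcept) (TT L : Type)
  (p : terminal_projection S TT L) (G : Inst S) (T : TT)
  (V : Type) (E : V -> V -> Prop) (l : V -> L)
  (HE : is_contracted_solution_graph S TT L p G T V E l)
  (Sx : V -> Sol S G -> Prop)
  (Hcert : certificate S TT L p G T V E l Sx)
  (alpha beta : Sol S G) (x y : V)
  (Hx : Sx x alpha) (Hy : Sx y beta) :
  sol_path S G alpha beta <-> clos_refl_trans V E x y.
Proof.
  destruct Hcert as (Hne & Hpart & _ & _ & Hconn & Hedge).
  split; intros Hpath.
  - now apply (node_path_of_sol_path _ _ _ _ _ Hpart Hedge) with alpha beta.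
  - now apply (sol_path_of_node_path _ _ _ _ _ Hne Hconn Hedge) with x y.
Qed.
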